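(* Let $N\ge 2$ be an integer, let $C>0$, and let $q,s,k\in[0,1]$ with $q>s$. Define $\Phi:[0,1]\to[0,1]$ by $$\Phi(b,0)=\frac{[qb+s(1-b)](1-k)}{[qb+s(1-b)](1-k)+[(1-q)b+(1-s)(1-b)]}=\frac{[qb+s(1-b)](1-k)}{1-[qb+s(1-b)]k},$$ and define functions $J_l,A_l:[0,1]\to\mathbb{R}$ by backward recursion: $J_{N-1}(b)=(1-kb)C$, and for $l=N-2,N-3,\dots,0$, $$A_l(b)=(1-kb)C+\big(bq+(1-b)s\big)k\,J_{l+1}(1)+\big(1-(bq+(1-b)s)k\big)\,J_{l+1}(\Phi(b,0)),\qquad J_l(b)=\min\{C,A_l(b)\}.$$ Then for each $l\in\{0,1,\dots,N-2\}$, the function $b\mapsto A_l(b)$ is piecewise linear and concave on $[0,1]$.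
   Context: This is the dynamic program of a finite-horizon POMDP for relay selection: $b\in[0,1]$ is the belief (conditional probability given past acknowledgement history) that the current relay link is good; $q$ is the probability a good link stays good, $s$ the probability a bad link becomes good, $k$ the probability an acknowledgement is received when the link is good (it is never received when the link is bad); $C$ is the penalty for a packet loss or for exploring and switching; $\Phi(b,0)$ is the Bayesian belief update after an acknowledgement failure (after an acknowledgement success the belief becomes $1$). $J_l$ is the optimal expected cost-to-go at time $l$, $C$ is the cost of exploring/switching, and $A_l$ is the expected cost of continuing on the current link. *)

From Stdlib Require Import Reals Lra.
Open Scope R_scope.

(* Bayesian belief update after an acknowledgement failure, Phi(b,0). *)
Definition Phi (q s k b : R) : R :=
  ((q * b + s * (1 - b)) * (1 - k)) /
  ((q * b + s * (1 - b)) * (1 - k) + ((1 - q) * b + (1 - s) * (1 - b))).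

(* Jrec n = J_{N-1-n}  (n = number of remaining backward steps). *)
Fixpoint Jrec (C q s k : R) (n : nat) (b : R) {struct n} : R :=
  match n with
  | O => (1 - k * b) * C
  | S m =>
      Rmin C ((1 - k * b) * C
              + (b * q + (1 - b) * s) * k * Jrec C q s k m 1
              + (1 - (b * q + (1 - b) * s) * k) * Jrec C q s k m (Phi q s k b))
  end.

Definition J (N : nat) (C q s k : R) (l : nat) (b : R) : R :=
  Jrec C q s k (N - 1 - l) b.

(* A_l for horizon N (meaningful for l <= N-2): uses J_{l+1}. *)
Definition A (N : nat) (C q s k : R) (l : nat) (b : R) : R :=
  (1 - k * b) * C
  + (b * q + (1 - b) * s) * k * J N C q s k (S l) 1
  + (1 - (b * q + (1 - b) * s) * k) * J N C q s k (S l) (Phi q s k b).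

Definition piecewise_linear01 (f : R -> R) : Prop :=
  exists (n : nat) (x a c : nat -> R),
    x O = 0 /\ x n = 1 /\
    (forall i, (i < n)%nat -> x i < x (S i)) /\
    (forall i, (i < n)%nat -> forall b, x i <= b <= x (S i) -> f b = a i * b + c i).

Definition concave01 (f : R -> R) : Prop :=
  forall x y t, 0 <= x <= 1 -> 0 <= y <= 1 -> 0 <= t <= 1 ->
    t * f x + (1 - t) * f y <= f (t * x + (1 - t) * y).

From Stdlib Require Import Reals Rminmax Lra Lia Psatz.
Open Scope R_scope.

(* Every J_l is, on [0,1], a minimum of finitely many affine functions of the
   belief.  The continuation term b |-> (1 - p(b) k) g(Phi b), with
   p(b) = b q + (1 - b) s, is a perspective transform: its weight is affine and
   nonnegative, and (1 - p(b) k) Phi b = p(b) (1 - k) is affine as well, so it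
   maps affine functions to affine functions and commutes with minima.  Hence
   the backward recursion preserves "minimum of affine functions", and A_l, the
   sum of such a minimum and an affine function, is concave and piecewise
   linear. *)

Inductive min_affine01 (f : R -> R) : Prop :=
| min_affine01_line a c :
    (forall x, 0 <= x <= 1 -> f x = a * x + c) -> min_affine01 f
| min_affine01_min g a c : min_affine01 g ->
    (forall x, 0 <= x <= 1 -> f x = Rmin (g x) (a * x + c)) -> min_affine01 f.

Lemma min_affine01_ext f g :
  min_affine01 f -> (forall x, 0 <= x <= 1 -> f x = g x) -> min_affine01 g.
Proof.
  intros [a c Hf | h a c Hh Hf] Efg.
  - apply (min_affine01_line g a c); intros x Hx; rewrite <- Efg; auto.
  - apply (min_affine01_min g h a c Hh); intros x Hx; rewrite <- Efg; auto.
Qed.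

Lemma min_affine01_add_line f a c :
  min_affine01 f -> min_affine01 (fun x => f x + (a * x + c)).
Proof.
  induction 1 as [f a0 c0 Hf | f g a0 c0 Hg IH Hf].
  - apply (min_affine01_line _ (a0 + a) (c0 + c)); intros x Hx.
    rewrite Hf by auto; ring.
  - apply (min_affine01_min _ _ (a0 + a) (c0 + c) IH); intros x Hx.
    rewrite Hf, <- R.plus_min_distr_r by auto; f_equal; ring.
Qed.

Lemma min_affine01_perspective f w phi aw cw ap cp :
  (forall b, 0 <= b <= 1 -> w b = aw * b + cw) ->
  (forall b, 0 <= b <= 1 -> 0 <= w b) ->
  (forall b, 0 <= b <= 1 -> 0 <= phi b <= 1) ->
  (forall b, 0 <= b <= 1 -> w b * phi b = ap * b + cp) ->
  min_affine01 f -> min_affine01 (fun b => w b * f (phi b)).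
Proof.
  intros Hw_aff Hw_ge0 Hphi Hwphi.
  assert (Hline : forall a c b, 0 <= b <= 1 ->
            w b * (a * phi b + c) = (a * ap + c * aw) * b + (a * cp + c * cw)).
  { intros a c b Hb.
    rewrite Rmult_plus_distr_l, (Rmult_comm a), <- Rmult_assoc, Hwphi, Hw_aff by auto.
    ring. }
  induction 1 as [f a c Hf | f g a c Hg IH Hf].
  - apply (min_affine01_line _ (a * ap + c * aw) (a * cp + c * cw)); intros b Hb.
    rewrite Hf by auto; auto.
  - apply (min_affine01_min _ _ (a * ap + c * aw) (a * cp + c * cw) IH); intros b Hb.
    rewrite Hf, <- Hline by auto.
    symmetry; apply R.min_monotone.
    intros x y Hxy; apply Rmult_le_compat_l; auto.
Qed.

Lemma min_affine01_concave f : min_affine01 f -> concave01 f.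
Proof.
  induction 1 as [f a c Hf | f g a c Hg IH Hf]; intros x y t Hx Hy Ht;
    assert (0 <= t * x + (1 - t) * y <= 1) by nra; rewrite !Hf by auto.
  - nra.
  - specialize (IH x y t Hx Hy Ht).
    pose proof (Rmin_l (g x) (a * x + c)); pose proof (Rmin_r (g x) (a * x + c)).
    pose proof (Rmin_l (g y) (a * y + c)); pose proof (Rmin_r (g y) (a * y + c)).
    apply Rmin_glb; nra.
Qed.

Inductive piecewise_affine (f : R -> R) : R -> R -> Prop :=
| piecewise_affine_piece u v a c : u < v ->
    (forall x, u <= x <= v -> f x = a * x + c) -> piecewise_affine f u v
| piecewise_affine_cat u w v :
    piecewise_affine f u w -> piecewise_affine f w v -> piecewise_affine f u v.

Lemma piecewise_affine_lt f u v : piecewise_affine f u v -> u < v.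
Proof. induction 1; lra. Qed.

Lemma piecewise_affine_ext f g u v : piecewise_affine f u v ->
  (forall x, u <= x <= v -> f x = g x) -> piecewise_affine g u v.
Proof.
  induction 1 as [u v a c Huv Hf | u w v Huw IHuw Hwv IHwv]; intros Efg.
  - apply (piecewise_affine_piece g u v a c Huv); intros x Hx; rewrite <- Efg; auto.
  - pose proof (piecewise_affine_lt _ _ _ Huw); pose proof (piecewise_affine_lt _ _ _ Hwv).
    apply (piecewise_affine_cat g u w v).
    + apply IHuw; intros; apply Efg; lra.
    + apply IHwv; intros; apply Efg; lra.
Qed.

Lemma piecewise_affine_min_ordered_lines u v a1 c1 a2 c2 : u < v ->
  (forall x, u <= x <= v -> a1 * x + c1 <= a2 * x + c2) \/
  (forall x, u <= x <= v -> a2 * x + c2 <= a1 * x + c1) ->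
  piecewise_affine (fun x => Rmin (a1 * x + c1) (a2 * x + c2)) u v.
Proof.
  intros Huv [H12 | H21].
  - apply (piecewise_affine_piece _ u v a1 c1 Huv); intros; apply Rmin_left; auto.
  - apply (piecewise_affine_piece _ u v a2 c2 Huv); intros; apply Rmin_right; auto.
Qed.

Lemma lines_ordered_off_crossing u v t a1 c1 a2 c2 :
  (forall x, a1 * x + c1 - (a2 * x + c2) = (a1 - a2) * (x - t)) ->
  v <= t \/ t <= u ->
  (forall x, u <= x <= v -> a1 * x + c1 <= a2 * x + c2) \/
  (forall x, u <= x <= v -> a2 * x + c2 <= a1 * x + c1).
Proof.
  intros Hd Ht.
  destruct (Rle_dec (a1 - a2) 0), Ht;
    [right | left | left | right]; intros x Hx; specialize (Hd x); nra.
Qed.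

Lemma piecewise_affine_min_lines u v a1 c1 a2 c2 : u < v ->
  piecewise_affine (fun x => Rmin (a1 * x + c1) (a2 * x + c2)) u v.
Proof.
  intros Huv.
  destruct (Req_dec a1 a2) as [<- | Ha].
  { apply piecewise_affine_min_ordered_lines; auto.
    destruct (Rle_dec c1 c2); [left | right]; intros; lra. }
  set (t := (c2 - c1) / (a1 - a2)).
  assert (Hd : forall x, a1 * x + c1 - (a2 * x + c2) = (a1 - a2) * (x - t))
    by (intros; unfold t; field; lra).
  assert (Hpiece : forall w z, w < z -> z <= t \/ t <= w ->
            piecewise_affine (fun x => Rmin (a1 * x + c1) (a2 * x + c2)) w z).
  { intros w z Hwz Ht.
    apply piecewise_affine_min_ordered_lines, (lines_ordered_off_crossing _ _ t); auto. }
  destruct (Rlt_dec u t), (Rlt_dec t v);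
    [apply (piecewise_affine_cat _ u t v) |..]; apply Hpiece; lra.
Qed.

Lemma piecewise_affine_min_line g u v a c : piecewise_affine g u v ->
  piecewise_affine (fun x => Rmin (g x) (a * x + c)) u v.
Proof.
  induction 1 as [u v a1 c1 Huv Hg | u w v _ IHuw _ IHwv].
  - apply piecewise_affine_ext with (fun x => Rmin (a1 * x + c1) (a * x + c)).
    + apply piecewise_affine_min_lines; auto.
    + intros x Hx; rewrite Hg; auto.
  - apply (piecewise_affine_cat _ u w v); auto.
Qed.

Lemma min_affine01_piecewise_affine f : min_affine01 f -> piecewise_affine f 0 1.
Proof.
  induction 1 as [f a c Hf | f g a c Hg IH Hf].
  - apply (piecewise_affine_piece f 0 1 a c); auto; lra.
  - apply piecewise_affine_ext with (fun x => Rmin (g x) (a * x + c)).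
    + apply piecewise_affine_min_line; auto.
    + intros x Hx; rewrite Hf; auto.
Qed.

Definition piecewise_linear_on (f : R -> R) (u v : R) : Prop :=
  exists (n : nat) (x a c : nat -> R),
    x O = u /\ x n = v /\
    (forall i, (i < n)%nat -> x i < x (S i)) /\
    (forall i, (i < n)%nat -> forall b, x i <= b <= x (S i) -> f b = a i * b + c i).

Lemma piecewise_linear_on_cat f u w v :
  piecewise_linear_on f u w -> piecewise_linear_on f w v -> piecewise_linear_on f u v.
Proof.
  intros (n1 & x1 & a1 & c1 & X0 & Xn & Xinc & Xaff)
         (n2 & x2 & a2 & c2 & Y0 & Yn & Yinc & Yaff).
  set (x i := if (i <=? n1)%nat then x1 i else x2 (i - n1)%nat).
  assert (Hx_left : forall i, (i <= n1)%nat -> x i = x1 i).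
  { intros i Hi; unfold x; destruct (Nat.leb_spec i n1); [auto | lia]. }
  assert (Hx_right : forall i, (n1 <= i)%nat -> x i = x2 (i - n1)%nat).
  { intros i Hi; unfold x; destruct (Nat.leb_spec i n1); [|auto].
    replace i with n1 by lia; rewrite Nat.sub_diag; congruence. }
  exists (n1 + n2)%nat, x,
    (fun i => if (i <? n1)%nat then a1 i else a2 (i - n1)%nat),
    (fun i => if (i <? n1)%nat then c1 i else c2 (i - n1)%nat).
  repeat split.
  - rewrite Hx_left by lia; auto.
  - rewrite Hx_right by lia; replace (n1 + n2 - n1)%nat with n2 by lia; auto.
  - intros i Hi; destruct (Nat.ltb_spec i n1).
    + rewrite !Hx_left by lia; apply Xinc; lia.
    + rewrite !Hx_right by lia; replace (S i - n1)%nat with (S (i - n1)) by lia.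
      apply Yinc; lia.
  - intros i Hi b; destruct (Nat.ltb_spec i n1).
    + rewrite !Hx_left by lia; apply Xaff; lia.
    + rewrite !Hx_right by lia; replace (S i - n1)%nat with (S (i - n1)) by lia.
      apply Yaff; lia.
Qed.

Lemma piecewise_affine_linear_on f u v :
  piecewise_affine f u v -> piecewise_linear_on f u v.
Proof.
  induction 1 as [u v a c Huv Hf | u w v _ IHuw _ IHwv].
  - exists 1%nat, (fun i => match i with O => u | _ => v end), (fun _ => a), (fun _ => c).
    repeat split; intros i Hi; replace i with O by lia; auto.
  - apply (piecewise_linear_on_cat f u w v); auto.
Qed.

Lemma Rdiv_sum_bounds x y : 0 <= x -> 0 <= y -> 0 <= x / (x + y) <= 1.
Proof.
  intros Hx Hy.
  destruct (Req_dec (x + y) 0) as [E | E].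
  - rewrite E, Rdiv_0_r; lra.
  - assert (0 < / (x + y)) by (apply Rinv_0_lt_compat; lra).
    pose proof (Rinv_r (x + y) E).
    unfold Rdiv; split; nra.
Qed.

Section BeliefRecursion.

Variables q s k : R.
Hypotheses (Hq : 0 <= q <= 1) (Hs : 0 <= s <= 1) (Hk : 0 <= k <= 1).

Lemma Phi_bounds b : 0 <= b <= 1 -> 0 <= Phi q s k b <= 1.
Proof. intros Hb; unfold Phi; apply Rdiv_sum_bounds; [apply Rmult_le_pos |]; nra. Qed.

Lemma nack_prob_mul_Phi b : 0 <= b <= 1 ->
  (1 - (b * q + (1 - b) * s) * k) * Phi q s k b = (q * b + s * (1 - b)) * (1 - k).
Proof.
  intros Hb; unfold Phi.
  set (p := q * b + s * (1 - b)).
  assert (Hp : 0 <= p <= 1) by (unfold p; nra).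
  replace (p * (1 - k) + ((1 - q) * b + (1 - s) * (1 - b))) with (1 - p * k)
    by (unfold p; ring).
  replace (b * q + (1 - b) * s) with p by (unfold p; ring).
  destruct (Req_dec (1 - p * k) 0) as [E | E].
  (* [1 - p k = 0] forces [p = k = 1]: then both sides vanish, Phi being [0/0 = 0]. *)
  - rewrite E; assert (p = 1 /\ k = 1) as [-> ->] by nra; ring.
  - field; auto.
Qed.

Lemma min_affine01_Bellman_step C g : min_affine01 g ->
  min_affine01 (fun b => (1 - k * b) * C + (b * q + (1 - b) * s) * k * g 1
                         + (1 - (b * q + (1 - b) * s) * k) * g (Phi q s k b)).
Proof.
  intros Hg.
  apply min_affine01_ext with
    (fun b => (1 - (b * q + (1 - b) * s) * k) * g (Phi q s k b)
              + (((q - s) * k * g 1 - k * C) * b + (C + s * k * g 1))).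
  - apply min_affine01_add_line.
    apply (min_affine01_perspective g _ _ (- (q - s) * k) (1 - s * k)
             ((q - s) * (1 - k)) (s * (1 - k))); auto.
    + intros b _; ring.
    + intros b Hb; assert (0 <= b * q + (1 - b) * s <= 1) by nra; nra.
    + exact Phi_bounds.
    + intros b Hb; rewrite nack_prob_mul_Phi by auto; ring.
  - intros b _; ring.
Qed.

Lemma min_affine01_Jrec C n : min_affine01 (Jrec C q s k n).
Proof.
  induction n as [| n IH]; simpl.
  - apply (min_affine01_line _ (- k * C) C); intros; ring.
  - apply (min_affine01_min _ _ 0 C (min_affine01_Bellman_step C _ IH)); intros x _.
    rewrite Rmin_comm; f_equal; ring.
Qed.

End BeliefRecursion.

Theorem proposition1 (N : nat) (C q s k : R) :
  (2 <= N)%nat -> 0 < C ->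
  0 <= q <= 1 -> 0 <= s <= 1 -> 0 <= k <= 1 -> s < q ->
  forall l : nat, (l <= N - 2)%nat ->
    piecewise_linear01 (A N C q s k l) /\ concave01 (A N C q s k l).
Proof.
  intros _ _ Hq Hs Hk _ l _.
  assert (HA : min_affine01 (A N C q s k l)).
  { unfold A, J; apply min_affine01_Bellman_step, min_affine01_Jrec; auto. }
  split.
  - apply piecewise_affine_linear_on, min_affine01_piecewise_affine, HA.
  - apply min_affine01_concave, HA.
Qed.
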